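(* For every integer $d\geq2$, $R_{2,d}(W_2\otimes W_d)=2d$.
   Context: Identify $S^d\mathbb{C}^2$ with binary forms of degree $d$ in a basis $\{x,y\}$; $W_d=x^{d-1}y$. The partially symmetric rank $R_{2,d}(T)$ of $T\in S^2\mathbb{C}^2\otimes S^d\mathbb{C}^2$ is the minimal $r$ with $T=\sum_{i=1}^r v_{i,1}^{\otimes 2}\otimes v_{i,2}^{\otimes d}$, $v_{i,j}\in\mathbb{C}^2$. *)

(* The complex numbers are modelled as R[i] = complex R for
   an arbitrary R : realType (a complete archimedean ordered field, i.e. R). *)
From HB Require Import structures.
From mathcomp Require Import all_boot all_order all_algebra.
From mathcomp Require Import reals complex.
Set Implicit Arguments. Unset Strict Implicit. Unset Printing Implicit Defensive.
Import Order.TTheory GRing.Theory Num.Theory.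
Local Open Scope ring_scope.

(* A tensor in (C^2)^{(x)2} (x) (C^2)^{(x)d}: its entries are indexed by
   a : 'I_2 -> 'I_2 (first two factors) and b : 'I_d -> 'I_2 (last d factors).
   S^2 C^2 (x) S^d C^2 is the subspace of tensors symmetric in each group. *)
Definition tensor2d (K : Type) (d : nat) := ('I_2 -> 'I_2) -> ('I_d -> 'I_2) -> K.

Definition psrank_one (K : nzRingType) (d : nat) (v w : 'I_2 -> K) : tensor2d K d :=
  fun a b => (\prod_(k < 2) v (a k)) * (\prod_(k < d) w (b k)).

Definition ps_decomp (K : nzRingType) (d r : nat) (T : tensor2d K d) : Prop :=
  exists (v w : 'I_r -> 'I_2 -> K),
    forall a b, T a b = \sum_(i < r) psrank_one (v i) (w i) a b.

Definition psrank_eq (K : nzRingType) (d : nat) (T : tensor2d K d) (n : nat) : Prop :=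
  ps_decomp n T /\ forall r, ps_decomp r T -> (n <= r)%N.

(* The symmetric tensor of the binary form W_m = x^{m-1} y, under the standard
   identification S^m C^2 = binary forms of degree m  (l^{(x)m} <-> (l.(x,y))^m). *)
Arguments psrank_one {K d}.
Definition W_sym (K : fieldType) (m : nat) (b : 'I_m -> 'I_2) : K :=
  if #|[pred k | val (b k) == 1%N]| == 1%N then (m%:R)^-1 else 0.

Definition W2_tensor_Wd (K : fieldType) (d : nat) : tensor2d K d :=
  fun a b => W_sym K a * W_sym K b.

From HB Require Import structures.
From mathcomp Require Import all_boot all_order all_algebra.
From mathcomp Require Import reals complex.
From mathcomp Require Import cyclic separable cyclotomic.
From mathcomp Require Import zify ring.
Import Order.TTheory GRing.Theory Num.Theory.
Local Open Scope ring_scope.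
Set Implicit Arguments. Unset Strict Implicit. Unset Printing Implicit Defensive.

(* Write a decomposition as a sum of terms (a_i x + b_i y)^2 (p_i x + q_i y)^d.

   Upper bound: xy has a Waring decomposition of length 2 and x^(d-1) y one of
   length d, over the d-th roots of unity.  Their product has 2d terms, whose
   scalar factors are absorbed by square roots into the quadratic factors.

   Lower bound: the entries of the sum are the moments
   sum_i a_i^(2-m1) b_i^m1 p_i^(d-m) q_i^m, which all vanish except at
   (m1, m) = (1, 1).  Send a pair (g, h) of binary forms of degree d - 1 to
   (a_i g(p_i, q_i) + b_i h(p_i, q_i))_i in K^r.  Multiplying a kernel element
   by a_i or b_i times suitable monomials and summing over i, the moment
   relations kill the two lowest coefficients of g and h; dividing by y and
   descending in degree kills all of them.  The map is thus injective, and
   2d <= r. *)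

Definition bform (K : comPzRingType) (k : nat) (c : nat -> K) (x y : K) : K :=
  \sum_(t < k.+1) c t * x ^+ (k - t) * y ^+ t.

Lemma bform_y0 (K : comPzRingType) k (c : nat -> K) x : bform k c x 0 = c 0%N * x ^+ k.
Proof.
rewrite /bform big_ord_recl subn0 expr0 mulr1 big1 ?addr0 // => t _.
by rewrite expr0n mulr0.
Qed.

Lemma bform_shift (K : comPzRingType) k (c : nat -> K) x y : c 0%N = 0 ->
  bform k.+1 c x y = y * bform k (fun t => c t.+1) x y.
Proof.
move=> c0; rewrite /bform big_ord_recl c0 !mul0r add0r mulr_sumr.
by apply: eq_bigr => t _; rewrite subSS exprS; ring.
Qed.

Lemma sum_delta1 (K : nzRingType) (F : nat -> K) (c : K) k n :
  (n <= 1)%N -> (1 - n <= k)%N ->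
  \sum_(t < k.+1) F t * (if (n + t == 1)%N then c else 0) = F (1 - n)%N * c.
Proof.
move=> le_n1 le_k; rewrite -ltnS in le_k.
rewrite (eq_bigr (fun t : 'I_k.+1 => if t == (1 - n)%N :> nat then F t * c else 0)).
  by rewrite -big_mkcond (big_ord1_eq _ (fun t => F t * c)) le_k.
move=> t _; have -> : (n + t == 1)%N = (t == 1 - n :> nat)%N.
  by apply/idP/idP => /eqP eq_t; apply/eqP; lia.
by case: ifP; rewrite ?mulr0.
Qed.

Section Syzygies.
Variables (K : fieldType) (r d : nat) (a b p q : 'I_r -> K).

Definition syzygy k (G H : nat -> K) :=
  forall i, a i * bform k G (p i) (q i) + b i * bform k H (p i) (q i) = 0.

Lemma syzygy_shift k G H :
  syzygy k.+1 G H -> G 0%N = 0 -> H 0%N = 0 -> G 1%N = 0 -> H 1%N = 0 ->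
  syzygy k (fun t => G t.+1) (fun t => H t.+1).
Proof.
move=> sGH G0 H0 G1 H1 i; have [qi0 | qi_neq0] := eqVneq (q i) 0.
  by rewrite qi0 !bform_y0 G1 H1 !mul0r !mulr0 addr0.
apply: (mulfI qi_neq0); rewrite mulr0 mulrDr mulrCA [q i * (b i * _)]mulrCA.
by rewrite -!bform_shift.
Qed.

Lemma syzygy_free_dim k :
  (forall G H, syzygy k G H -> forall t, (t <= k)%N -> G t = 0 /\ H t = 0) ->
  (k.+1 + k.+1 <= r)%N.
Proof.
move=> trivial_syz.
pose A : 'M[K]_(k.+1 + k.+1, r) := \matrix_(j, i)
  match split j with
  | inl t => a i * p i ^+ (k - t) * q i ^+ t
  | inr t => b i * p i ^+ (k - t) * q i ^+ t
  end.
suff: row_free A by move/eqP <-; exact: rank_leq_col.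
rewrite -kermx_eq0; apply/rowV0P => u /sub_kermxP uA0; apply/rowP => j.
pose G t := u 0 (lshift k.+1 (inord t)); pose H t := u 0 (rshift k.+1 (inord t)).
have sGH : syzygy k G H.
  move=> i; have := congr1 (fun M : 'rV_r => M 0 i) uA0.
  rewrite !mxE big_split_ord /= => <-; rewrite /bform !mulr_sumr.
  congr (_ + _); apply: eq_bigr => t _;
    by rewrite mxE ?(unsplitK (inl t)) ?(unsplitK (inr t)) /G /H inord_val; ring.
rewrite mxE -(splitK j); case: (split j) => t /=.
  by have [] := trivial_syz G H sGH t (ltn_ord t); rewrite /G inord_val.
by have [] := trivial_syz G H sGH t (ltn_ord t); rewrite /H inord_val.
Qed.

(* [(a i, b i)] and [(p i, q i)] are the two vectors of the i-th rank-one term,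
   and [moments] says the sum has the entries of a nonzero multiple of W_2 (x) W_d. *)
Variable c : K.
Hypothesis c_neq0 : c != 0.
Hypothesis moments : forall m1 m, (m1 <= 2)%N -> (m <= d)%N ->
  \sum_i a i ^+ (2 - m1) * b i ^+ m1 * (p i ^+ (d - m) * q i ^+ m) =
  if (m1 == 1%N) && (m == 1%N) then c else 0.

Let pairing (x y : 'I_r -> K) m := \sum_i x i * y i * p i ^+ (d - m) * q i ^+ m.

Let pairing_moment x y m1 m : (m1 <= 2)%N -> (m <= d)%N ->
  (forall i, x i * y i = a i ^+ (2 - m1) * b i ^+ m1) ->
  pairing x y m = if (m1 == 1%N) && (m == 1%N) then c else 0.
Proof.
move=> le_m1 le_m xy; rewrite -moments //.
by apply: eq_bigr => i _; rewrite xy mulrA.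
Qed.

Lemma syzygy_pairing k G H x n : syzygy k G H -> (k + n <= d)%N ->
  \sum_(t < k.+1) (G t * pairing x a (n + t) + H t * pairing x b (n + t)) = 0.
Proof.
move=> sGH le_knd.
transitivity (\sum_i x i * p i ^+ (d - k - n) * q i ^+ n *
    (a i * bform k G (p i) (q i) + b i * bform k H (p i) (q i))); last first.
  by rewrite big1 // => i _; rewrite sGH mulr0.
under eq_bigr do rewrite !mulr_sumr -big_split.
rewrite exchange_big; apply: eq_bigr => i _ /=.
rewrite /bform mulrDr !mulr_sumr -big_split; apply: eq_bigr => t _ /=.
have le_tk : (t <= k)%N by rewrite -ltnS.
have -> : (d - (n + t) = (k - t) + (d - k - n))%N by lia.
rewrite !exprD; ring.
Qed.

Let pairing_aa m : (m <= d)%N -> pairing a a m = 0.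
Proof. by move=> le_md; rewrite (@pairing_moment _ _ 0) // => i; ring. Qed.

Let pairing_bb m : (m <= d)%N -> pairing b b m = 0.
Proof. by move=> le_md; rewrite (@pairing_moment _ _ 2) // => i; ring. Qed.

Let pairing_ab m : (m <= d)%N -> pairing a b m = if m == 1%N then c else 0.
Proof. by move=> le_md; rewrite (@pairing_moment _ _ 1) // => i; ring. Qed.

Let pairing_ba m : (m <= d)%N -> pairing b a m = if m == 1%N then c else 0.
Proof. by move=> le_md; rewrite (@pairing_moment _ _ 1) // => i; ring. Qed.

Lemma syzygy_low_coef k G H t : (k < d)%N -> syzygy k G H ->
  (t <= 1)%N -> (t <= k)%N -> G t = 0 /\ H t = 0.
Proof.
move=> lt_kd sGH le_t1 le_tk; have le_knd : (k + (1 - t) <= d)%N by lia.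
have coef x y (F : nat -> K) :
    (forall m, (m <= d)%N -> pairing x y m = if m == 1%N then c else 0) ->
    \sum_(s < k.+1) F s * pairing x y (1 - t + s) = F t * c.
  move=> xy; transitivity (\sum_(s < k.+1) F s * (if (1 - t + s == 1)%N then c else 0)).
    by apply: eq_bigr => s _; rewrite xy //; have := ltn_ord s; lia.
  by rewrite sum_delta1 ?subKn ?leq_subr.
have zero x y (F : nat -> K) : (forall m, (m <= d)%N -> pairing x y m = 0) ->
    \sum_(s < k.+1) F s * pairing x y (1 - t + s) = 0.
  by move=> xy; rewrite big1 // => s _; rewrite xy ?mulr0 //; have := ltn_ord s; lia.
have := syzygy_pairing a sGH le_knd; have := syzygy_pairing b sGH le_knd.
rewrite !big_split /= (coef b a) ?(zero b b) ?(zero a a) ?(coef a b) // addr0 add0r.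
by move=> Gc Hc; split; apply: (mulIf c_neq0); rewrite mul0r.
Qed.

Lemma syzygy_trivial k G H : (k < d)%N -> syzygy k G H ->
  forall t, (t <= k)%N -> G t = 0 /\ H t = 0.
Proof.
elim: k G H => [|k IHk] G H lt_kd sGH t le_tk.
  exact: syzygy_low_coef lt_kd sGH (leq_trans le_tk _) le_tk.
have [G0 H0] := syzygy_low_coef (t := 0) lt_kd sGH isT isT.
have [G1 H1] := syzygy_low_coef (t := 1) lt_kd sGH isT isT.
case: t le_tk => [|t] le_tk; first by [].
exact: IHk (ltnW lt_kd) (syzygy_shift sGH G0 H0 G1 H1) t le_tk.
Qed.

Lemma ps_rank_ge : (2 * d <= r)%N.
Proof.
have [-> // | d_gt0] := posnP d.
rewrite mul2n -addnn -(prednK d_gt0); apply: syzygy_free_dim => G H.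
by apply: syzygy_trivial; rewrite prednK.
Qed.

End Syzygies.

Definition weight n (b : 'I_n -> 'I_2) := #|[pred k | b k == 1%N :> nat]|.

Lemma weight_le n (b : 'I_n -> 'I_2) : (weight b <= n)%N.
Proof. by rewrite -[n in (_ <= n)%N]card_ord max_card. Qed.

Lemma prod_weight (R : comPzRingType) n (b : 'I_n -> 'I_2) (w : 'I_2 -> R) :
  \prod_(k < n) w (b k) = w ord0 ^+ (n - weight b) * w ord_max ^+ weight b.
Proof.
rewrite (bigID [pred k | b k == 1%N :> nat]) /= mulrC.
have card_zeros : #|[predC [pred k | b k == 1%N :> nat]]| = (n - weight b)%N.
  by apply/eqP; rewrite -(eqn_add2l (weight b)) subnKC ?weight_le // cardC card_ord.
congr (_ * _).
  rewrite -card_zeros -prodr_const; apply: eq_big => // k /negbTE b_neq1.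
  by congr w; apply: val_inj; move: (ltn_ord (b k)) b_neq1 => /=; case: (b k) => [[|[|]]].
by rewrite -prodr_const; apply: eq_big => // k /eqP b_eq1; congr w; apply: val_inj.
Qed.

Definition ones_upto {n} m : 'I_n -> 'I_2 := fun k => if (k < m)%N then ord_max else ord0.

Lemma weight_ones_upto n m : (m <= n)%N -> weight (ones_upto m : 'I_n -> 'I_2) = m.
Proof.
move=> le_mn; rewrite /weight -sum1_card.
rewrite (eq_bigl (fun k : 'I_n => (k < m)%N)) => [|k]; last first.
  by rewrite !inE /ones_upto; case: ltnP.
by rewrite -(big_ord_widen _ (fun=> 1%N) le_mn) sum_nat_const card_ord muln1.
Qed.

Definition W_entry (K : fieldType) n m : K := if m == 1%N then n%:R^-1 else 0.

Lemma W_symE (K : fieldType) n (b : 'I_n -> 'I_2) : W_sym K b = W_entry K n (weight b).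
Proof. by []. Qed.

Lemma W_entry_mul (K : fieldType) d m1 m :
  W_entry K 2 m1 * W_entry K d m = if (m1 == 1%N) && (m == 1%N) then (2 * d)%:R^-1 else 0.
Proof.
rewrite /W_entry; case: (m1 == 1%N); case: (m == 1%N); rewrite ?mulr0 ?mul0r //.
by rewrite natrM invfM.
Qed.

Definition ps_entry (K : comPzRingType) d (I : finType) (v w : I -> 'I_2 -> K) m1 m : K :=
  \sum_i v i ord0 ^+ (2 - m1) * v i ord_max ^+ m1 *
          (w i ord0 ^+ (d - m) * w i ord_max ^+ m).

Lemma sum_psrank_one (K : comNzRingType) d r (v w : 'I_r -> 'I_2 -> K)
    (a : 'I_2 -> 'I_2) (b : 'I_d -> 'I_2) :
  \sum_i psrank_one (v i) (w i) a b = ps_entry d v w (weight a) (weight b).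
Proof. by apply: eq_bigr => i _; rewrite /psrank_one !prod_weight. Qed.

Lemma ps_entries_of_decomp (K : fieldType) d r : ps_decomp r (@W2_tensor_Wd K d) ->
  exists v w : 'I_r -> 'I_2 -> K, forall m1 m, (m1 <= 2)%N -> (m <= d)%N ->
    ps_entry d v w m1 m = W_entry K 2 m1 * W_entry K d m.
Proof.
case=> v [w vw]; exists v, w => m1 m le_m1 le_m.
have := vw (ones_upto m1) (ones_upto m).
by rewrite sum_psrank_one /W2_tensor_Wd !W_symE !weight_ones_upto // => ->.
Qed.

Lemma ps_decomp_of_entries (K : fieldType) d (I : finType) (v w : I -> 'I_2 -> K) :
  (forall m1 m, (m1 <= 2)%N -> (m <= d)%N ->
    ps_entry d v w m1 m = W_entry K 2 m1 * W_entry K d m) ->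
  ps_decomp #|I| (@W2_tensor_Wd K d).
Proof.
move=> vw; exists (v \o enum_val), (w \o enum_val) => a b.
rewrite sum_psrank_one /W2_tensor_Wd !W_symE -vw ?weight_le //.
by rewrite /ps_entry (reindex (@enum_val I predT)) //; exact/onW_bij/enum_val_bij.
Qed.

Definition sym_entry (K : comPzRingType) n (I : finType) (lam : I -> K)
    (x : I -> 'I_2 -> K) m : K :=
  \sum_i lam i * (x i ord0 ^+ (n - m) * x i ord_max ^+ m).

Lemma ps_entry_pair (K : comPzRingType) d (I J : finType) (lam : I -> K)
    (x : I -> 'I_2 -> K) (mu : J -> K) (y : J -> 'I_2 -> K) (s : I * J -> K) m1 m :
  (forall ij, s ij ^+ 2 = lam ij.1 * mu ij.2) -> (m1 <= 2)%N ->
  ps_entry d (fun ij k => s ij * x ij.1 k) (fun ij => y ij.2) m1 m =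
  sym_entry 2 lam x m1 * sym_entry d mu y m.
Proof.
move=> s2 le_m1; rewrite /sym_entry mulr_suml.
under eq_bigr do rewrite mulr_sumr.
rewrite pair_bigA; apply: eq_bigr => -[i j] _ /=.
have s_sq : s (i, j) ^+ (2 - m1) * s (i, j) ^+ m1 = lam i * mu j.
  by rewrite -exprD subnK // s2.
rewrite !exprMn; ring: s_sq.
Qed.

(* xy = ((x + y)^2 - (x - y)^2) / 4 *)
Lemma W2_waring (K : numFieldType) :
  exists (lam : 'I_2 -> K) (x : 'I_2 -> 'I_2 -> K),
    forall m1, (m1 <= 2)%N -> sym_entry 2 lam x m1 = W_entry K 2 m1.
Proof.
exists (fun e => (-1) ^+ e / 4%:R), (fun e k => (-1) ^+ (e * k)) => m1 le_m1.
have two_neq0 : (2%:R : K) != 0 by rewrite pnatr_eq0.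
have four_neq0 : (4%:R : K) != 0 by rewrite pnatr_eq0.
rewrite /sym_entry /W_entry !big_ord_recr big_ord0 /=.
by case: m1 le_m1 => [|[|[|]]] //= _; field.
Qed.

Lemma sum_expr_unity_root (K : idomainType) n (y : K) : y ^+ n = 1 ->
  \sum_(j < n) y ^+ j = if y == 1 then n%:R else 0.
Proof.
move=> yn1; have [-> | y_neq1] := eqVneq y 1.
  by rewrite (eq_bigr (fun=> 1)) ?sumr_const ?card_ord // => j _; rewrite expr1n.
apply/eqP; have := subrX1 y n; rewrite yn1 subrr => /esym/eqP.
by rewrite mulf_eq0 subr_eq0 (negbTE y_neq1).
Qed.

Lemma eqn_mod_1 d m : (1 < d)%N -> (m <= d)%N -> (m == 1 %[mod d]) = (m == 1%N).
Proof.
move=> lt1d; rewrite leq_eqVlt => /orP[/eqP -> | lt_md].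
  by rewrite modnn (modn_small lt1d) (gtn_eqF lt1d).
by rewrite !modn_small.
Qed.

(* x^(d-1) y = d^-2 * sum_j z^-j (x + z^j y)^d *)
Lemma Wd_waring (K : fieldType) d (z : K) : (1 < d)%N -> d.-primitive_root z ->
  exists (mu : 'I_d -> K) (y : 'I_d -> 'I_2 -> K),
    forall m, (m <= d)%N -> sym_entry d mu y m = W_entry K d m.
Proof.
move=> lt1d prim_z.
have z_neq0 : z != 0 by rewrite (prim_root_eq0 prim_z) gtn_eqF // ltnW.
have d_neq0 := prim_root_natf_neq0 prim_z.
exists (fun j => (z ^+ j)^-1 / d%:R ^+ 2), (fun j k => z ^+ (j * k)) => m le_md.
transitivity (d%:R ^- 2 * \sum_(j < d) (z ^+ m / z) ^+ j).
  rewrite /sym_entry mulr_sumr; apply: eq_bigr => j _ /=.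
  by rewrite muln0 muln1 expr0 expr1n mul1r exprMn exprVn -!exprM mulnC; ring.
rewrite sum_expr_unity_root; last first.
  by rewrite exprMn exprVn -exprM mulnC exprM (prim_expr_order prim_z) expr1n invr1 mulr1.
rewrite -(inj_eq (mulIf z_neq0)) mul1r divfK // -{2}[z]expr1 (eq_prim_root_expr prim_z).
by rewrite eqn_mod_1 // /W_entry; case: (m == 1%N); rewrite ?mulr0 //; field.
Qed.

Lemma closed_prim_root_exists (F : closedFieldType) n :
  (0 < n)%N -> n%:R != 0 :> F ->
  exists z : F, n.-primitive_root z.
Proof.
move=> n_gt0 n_neq0; pose p : {poly F} := 'X^n - 1.
have [rs Dp] := closed_field_poly_normal p.
rewrite (monicP _) ?monicXnsubC // scale1r in Dp.
have unity_rs : all n.-unity_root rs by apply/allP => z; rewrite -root_prod_XsubC -Dp.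
have size_rs : (n < (size rs).+1)%N by rewrite -(size_prod_XsubC rs id) -Dp size_XnsubC.
have [|z _ prim_z] := hasP (has_prim_root n_gt0 unity_rs _ size_rs); last by exists z.
by rewrite -separable_prod_XsubC -Dp separable_Xn_sub_1.
Qed.

Lemma W2Wd_ps_entries (F : numClosedFieldType) d : (1 < d)%N ->
  exists v w : 'I_2 * 'I_d -> 'I_2 -> F, forall m1 m, (m1 <= 2)%N -> (m <= d)%N ->
    ps_entry d v w m1 m = W_entry F 2 m1 * W_entry F d m.
Proof.
move=> lt1d.
have [z prim_z] : exists z : F, d.-primitive_root z.
  by apply: closed_prim_root_exists; rewrite ?pnatr_eq0 -?lt0n (ltnW lt1d).
have [lam [x W2_lam]] := W2_waring F.
have [mu [y Wd_mu]] := Wd_waring lt1d prim_z.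
exists (fun ij k => sqrtC (lam ij.1 * mu ij.2) * x ij.1 k), (fun ij => y ij.2).
move=> m1 m le_m1 le_m; rewrite (@ps_entry_pair _ d _ _ lam x mu y) ?W2_lam ?Wd_mu //.
by move=> ij; rewrite sqrtCK.
Qed.

Theorem proposition4p4 (R : realType) (d : nat) (hd : (2 <= d)%N) :
  psrank_eq (@W2_tensor_Wd R[i] d) (2 * d)%N.
Proof.
split.
  have [v [w vw]] := W2Wd_ps_entries R[i] hd.
  by have := ps_decomp_of_entries vw; rewrite card_prod !card_ord.
move=> r /ps_entries_of_decomp [v [w vw]].
apply: (@ps_rank_ge _ r d (fun i => v i ord0) (fun i => v i ord_max)
          (fun i => w i ord0) (fun i => w i ord_max) (2 * d)%:R^-1).
  by rewrite invr_eq0 pnatr_eq0 muln_eq0 negb_or -!lt0n (ltnW hd).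
by move=> m1 m le_m1 le_m; rewrite -W_entry_mul -vw.
Qed.
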